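(* For every set $\Gamma\cup\{\varphi\}$ of formulas over $\Sigma^\circ$: if $\Gamma\vdash_{\bf Cila}\varphi$ then $\Gamma\vDash^{\mathsf{RN}}_{\mathcal{M}_{\bf Cila}}\varphi$.
   Context: $\Sigma^\circ$ has unary $\neg,\circ$ and binary $\wedge,\vee,\to$. ${\bf Cila}$ is the Hilbert calculus with Modus Ponens as only rule and axiom schemata: $\alpha\to(\beta\to\alpha)$; $(\alpha\to(\beta\to\gamma))\to((\alpha\to\beta)\to(\alpha\to\gamma))$; $\alpha\to(\beta\to(\alpha\wedge\beta))$; $(\alpha\wedge\beta)\to\alpha$; $(\alpha\wedge\beta)\to\beta$; $\alpha\to(\alpha\vee\beta)$; $\beta\to(\alpha\vee\beta)$; $(\alpha\to\gamma)\to((\beta\to\gamma)\to((\alpha\vee\beta)\to\gamma))$; $\alpha\vee\neg\alpha$; $\alpha\vee(\alpha\to\beta)$; $\circ\alpha\to(\alpha\to(\neg\alpha\to\beta))$; $\neg(\alpha\wedge\neg\alpha)\to\circ\alpha$; $\neg\circ\alpha\to(\alpha\wedge\neg\alpha)$; $\neg\neg\alpha\to\alpha$; and $(\circ\alpha\wedge\circ\beta)\to\circ(\alpha\#\beta)$ for $\#\in\{\vee,\wedge,\to\}$. $\mathcal{A}_{\bf Cila}$ is the $\Sigma^\circ$-multialgebra with universe $\{F,t,T\}$, $D=\{t,T\}$, and: $\tilde\vee$: $F\tilde\vee F=\{F\}$, $F\tilde\vee T=T\tilde\vee F=T\tilde\vee T=\{T\}$, and $x\tilde\vee y=D$ whenever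 $t\in\{x,y\}$; $\tilde\wedge$: $x\tilde\wedge y=\{F\}$ if $F\in\{x,y\}$, $T\tilde\wedge T=\{T\}$, $t\tilde\wedge t=t\tilde\wedge T=T\tilde\wedge t=D$; $\tilde\neg F=\{T\}$, $\tilde\neg t=D$, $\tilde\neg T=\{F\}$; $\tilde\to$: $F\tilde\to F=F\tilde\to T=T\tilde\to T=\{T\}$, $t\tilde\to F=T\tilde\to F=\{F\}$, and $x\tilde\to t=D$ for all $x$, $t\tilde\to T=D$; $\tilde\circ F=\tilde\circ T=\{T\}$, $\tilde\circ t=\{F\}$. A valuation is a map $\nu$ from formulas to $\{F,t,T\}$ with $\nu(\#\alpha)\in\tilde\#\nu(\alpha)$ and $\nu(\alpha\#\beta)\in\nu(\alpha)\tilde\#\nu(\beta)$. $\mathcal{F}_{\bf Cila}$ is the set of valuations with $\nu(\alpha)=t\Rightarrow\nu(\alpha\wedge\neg\alpha)=T$ for all $\alpha$. $\mathcal{M}_{\bf Cila}=(\mathcal{A}_{\bf Cila},D,\mathcal{F}_{\bf Cila})$; $\Gamma\vDash^{\mathsf{RN}}_{\mathcal{M}_{\bf Cila}}\varphi$ iff every $\nu\in\mathcal{F}_{\bf Cila}$ with $\nu[\Gamma]\subseteq D$ has $\nu(\varphi)\in D$. *)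

Inductive formula : Type :=
| Var  : nat -> formula
| Neg  : formula -> formula
| Circ : formula -> formula
| And  : formula -> formula -> formula
| Or   : formula -> formula -> formula
| Imp  : formula -> formula -> formula.

Inductive bincon : Type := BAnd | BOr | BImp.

Definition bin (c : bincon) : formula -> formula -> formula :=
  match c with BAnd => And | BOr => Or | BImp => Imp end.

Inductive cila_axiom : formula -> Prop :=
| Ax1  a b   : cila_axiom (Imp a (Imp b a))
| Ax2  a b c : cila_axiom (Imp (Imp a (Imp b c)) (Imp (Imp a b) (Imp a c)))
| Ax3  a b   : cila_axiom (Imp a (Imp b (And a b)))
| Ax4  a b   : cila_axiom (Imp (And a b) a)
| Ax5  a b   : cila_axiom (Imp (And a b) b)
| Ax6  a b   : cila_axiom (Imp a (Or a b))
| Ax7  a b   : cila_axiom (Imp b (Or a b))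
| Ax8  a b c : cila_axiom (Imp (Imp a c) (Imp (Imp b c) (Imp (Or a b) c)))
| Ax9  a     : cila_axiom (Or a (Neg a))
| Ax10 a b   : cila_axiom (Or a (Imp a b))
| Ax11 a b   : cila_axiom (Imp (Circ a) (Imp a (Imp (Neg a) b)))
| Ax12 a     : cila_axiom (Imp (Neg (And a (Neg a))) (Circ a))
| Ax13 a     : cila_axiom (Imp (Neg (Circ a)) (And a (Neg a)))
| Ax14 a     : cila_axiom (Imp (Neg (Neg a)) a)
| Ax15 c a b : cila_axiom (Imp (And (Circ a) (Circ b)) (Circ (bin c a b))).

Inductive derivable (Gamma : formula -> Prop) : formula -> Prop :=
| D_hyp  phi : Gamma phi -> derivable Gamma phi
| D_ax   phi : cila_axiom phi -> derivable Gamma phi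
| D_mp   phi psi : derivable Gamma phi -> derivable Gamma (Imp phi psi) ->
                   derivable Gamma psi.

Inductive tv : Type := vF | vt | vT.

Definition designated (x : tv) : Prop := x = vt \/ x = vT.

(* Multioperations of A_Cila, as membership predicates: op x y z <-> z in x op~ y. *)
Definition or_m (x y z : tv) : Prop :=
  match x, y with
  | vF, vF => z = vF
  | vt, _ | _, vt => designated z
  | _, _ => z = vT
  end.

Definition and_m (x y z : tv) : Prop :=
  match x, y with
  | vF, _ | _, vF => z = vF
  | vT, vT => z = vT
  | _, _ => designated z
  end.

Definition neg_m (x z : tv) : Prop :=
  match x with
  | vF => z = vT
  | vt => designated z
  | vT => z = vF
  end.

Definition imp_m (x y z : tv) : Prop :=
  match x, y with
  | _, vt => designated z
  | vt, vT => designated z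
  | vF, _ => z = vT
  | vT, vT => z = vT
  | vt, vF | vT, vF => z = vF
  end.

Definition circ_m (x z : tv) : Prop :=
  match x with
  | vt => z = vF
  | _ => z = vT
  end.

Definition valuation (v : formula -> tv) : Prop :=
  forall a b : formula,
    neg_m (v a) (v (Neg a)) /\
    circ_m (v a) (v (Circ a)) /\
    and_m (v a) (v b) (v (And a b)) /\
    or_m (v a) (v b) (v (Or a b)) /\
    imp_m (v a) (v b) (v (Imp a b)).

Definition F_Cila (v : formula -> tv) : Prop :=
  valuation v /\ forall a : formula, v a = vt -> v (And a (Neg a)) = vT.

Definition RN_consequence (Gamma : formula -> Prop) (phi : formula) : Prop :=
  forall v : formula -> tv, F_Cila v ->
    (forall g, Gamma g -> designated (v g)) -> designated (v phi).

From Stdlib Require Import Setoid.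

(* The binary multioperations of A_Cila are "classical on designation": under
   every valuation an implication, conjunction or disjunction is designated
   exactly when the corresponding Boolean combination of the designation of
   its arguments holds.  Negation is classical on F and T (it swaps them) and
   sends t to a designated value; consistency takes the value F on t and T
   elsewhere.  Moreover the binary multioperations never produce t from
   arguments in {F, T}.

   With them, axioms 1-8 and 10 are classical tautologies in the designation
   of the subformulas; axioms 9 and 11-14 follow by a case split on the value
   of the formula a, where axioms 12-13 use the extra condition of F_Cila
   (v a = t forces v (a /\ ~a) = T); axiom 15 uses the closure of {F, T}
   under the binary multioperations.  Modus Ponens preserves designation, so
   soundness follows by induction on derivations. *)

(* Designation is decidable; needed for the excluded-middle axiom 10. *)
Lemma designated_dec (x : tv) : designated x \/ ~ designated x.
Proof.
  unfold designated; destruct x; intuition discriminate.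
Qed.

Lemma designated_t : designated vt.
Proof. left; reflexivity. Qed.

Lemma designated_T : designated vT.
Proof. right; reflexivity. Qed.

Lemma not_designated_F : ~ designated vF.
Proof.
  unfold designated; intuition discriminate.
Qed.

Lemma tv_eq_t (x : tv) : x = vt \/ x <> vt.
Proof. destruct x; [right | left | right]; congruence. Qed.

Ltac truth_table := unfold designated; simpl in *; intuition (subst; discriminate).

Lemma imp_m_designated (x y z : tv) :
  imp_m x y z -> (designated z <-> (designated x -> designated y)).
Proof.
  destruct x, y; truth_table.
Qed.

Lemma and_m_designated (x y z : tv) :
  and_m x y z -> (designated z <-> designated x /\ designated y).
Proof.
  destruct x, y; truth_table.
Qed.

Lemma or_m_designated (x y z : tv) :
  or_m x y z -> (designated z <-> designated x \/ designated y).
Proof.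
  destruct x, y; truth_table.
Qed.

Definition bin_m (c : bincon) : tv -> tv -> tv -> Prop :=
  match c with BAnd => and_m | BOr => or_m | BImp => imp_m end.

Lemma bin_m_classical (c : bincon) (x y z : tv) :
  x <> vt -> y <> vt -> bin_m c x y z -> z <> vt.
Proof.
  destruct c, x, y; simpl; congruence.
Qed.

Section Valuation.

Variable v : formula -> tv.
Hypothesis Hv : valuation v.

Lemma valuation_neg (a : formula) : neg_m (v a) (v (Neg a)).
Proof. apply (Hv a a). Qed.

Lemma valuation_circ (a : formula) : circ_m (v a) (v (Circ a)).
Proof. apply (Hv a a). Qed.

Lemma valuation_bin (c : bincon) (a b : formula) :
  bin_m c (v a) (v b) (v (bin c a b)).
Proof.
  destruct c; simpl; apply (Hv a b).
Qed.

Lemma designated_imp (a b : formula) :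
  designated (v (Imp a b)) <-> (designated (v a) -> designated (v b)).
Proof. apply imp_m_designated, (valuation_bin BImp). Qed.

Lemma designated_and (a b : formula) :
  designated (v (And a b)) <-> designated (v a) /\ designated (v b).
Proof. apply and_m_designated, (valuation_bin BAnd). Qed.

Lemma designated_or (a b : formula) :
  designated (v (Or a b)) <-> designated (v a) \/ designated (v b).
Proof. apply or_m_designated, (valuation_bin BOr). Qed.

Lemma neg_of_F (a : formula) : v a = vF -> v (Neg a) = vT.
Proof. intros E; pose proof (valuation_neg a) as H; rewrite E in H; exact H. Qed.

Lemma neg_of_T (a : formula) : v a = vT -> v (Neg a) = vF.
Proof. intros E; pose proof (valuation_neg a) as H; rewrite E in H; exact H. Qed.

Lemma neg_of_t (a : formula) : v a = vt -> designated (v (Neg a)).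
Proof. intros E; pose proof (valuation_neg a) as H; rewrite E in H; exact H. Qed.

Lemma designated_circ (a : formula) : designated (v (Circ a)) <-> v a <> vt.
Proof.
  pose proof (valuation_circ a) as H.
  destruct (v a); simpl in H; rewrite H; truth_table.
Qed.

Lemma circ_of_classical (a : formula) : v a <> vt -> v (Circ a) = vT.
Proof.
  pose proof (valuation_circ a) as H; destruct (v a); congruence.
Qed.

Lemma mp_designated (a b : formula) :
  designated (v a) -> designated (v (Imp a b)) -> designated (v b).
Proof.
  intros Ha Hab; exact (proj1 (designated_imp a b) Hab Ha).
Qed.

End Valuation.

Lemma axiom_designated (v : formula -> tv) (phi : formula) :
  F_Cila v -> cila_axiom phi -> designated (v phi).
Proof.
  intros [Hv Ht] Hax.
  pose proof (designated_imp v Hv) as Dimp.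
  pose proof (designated_and v Hv) as Dand.
  pose proof (designated_or v Hv) as Dor.
  destruct Hax as [a b | a b c | a b | a b | a b | a b | a b | a b c
                  | a | a b | a b | a | a | a | c a b].
  (* Axioms 1-8: positive tautologies. *)
  1-8: rewrite ?Dimp, ?Dand, ?Dor; tauto.
  (* Axiom 9: a \/ ~a; when a is false, ~a is true. *)
  - rewrite Dor; destruct (v a) eqn:E.
    + right; rewrite (neg_of_F v Hv a E); apply designated_T.
    + left; apply designated_t.
    + left; apply designated_T.
  - rewrite Dor, Dimp; destruct (designated_dec (v a)); tauto.
  - rewrite !Dimp, (designated_circ v Hv); intros Hc Ha Hna.
    destruct (v a) eqn:E.
    + contradiction (not_designated_F Ha).
    + contradiction.
    + rewrite (neg_of_T v Hv a E) in Hna; contradiction (not_designated_F Hna).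
  (* Axiom 12: ~(a /\ ~a) forces consistency, since v a = t makes a /\ ~a = T. *)
  - rewrite Dimp; intros Hn; apply (designated_circ v Hv); intros E.
    rewrite (neg_of_T v Hv _ (Ht a E)) in Hn; contradiction (not_designated_F Hn).
  (* Axiom 13: ~circ a forces v a = t, whence a /\ ~a = T. *)
  - rewrite Dimp; intros Hn; destruct (tv_eq_t (v a)) as [E | E].
    + rewrite (Ht a E); apply designated_T.
    + rewrite (neg_of_T v Hv _ (circ_of_classical v Hv a E)) in Hn.
      contradiction (not_designated_F Hn).
  (* Axiom 14: double negation elimination; ~~a is F when a is F. *)
  - rewrite Dimp; intros Hnn; destruct (v a) eqn:E.
    + rewrite (neg_of_T v Hv _ (neg_of_F v Hv a E)) in Hnn.
      contradiction (not_designated_F Hnn).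
    + apply designated_t.
    + apply designated_T.
  - rewrite Dimp, Dand, !(designated_circ v Hv); intros [Ha Hb].
    exact (bin_m_classical c _ _ _ Ha Hb (valuation_bin v Hv c a b)).
Qed.

Theorem mainTheorem5 :
  forall (Gamma : formula -> Prop) (phi : formula),
    derivable Gamma phi -> RN_consequence Gamma phi.
Proof.
  intros Gamma phi Hder v Hf HGamma.
  induction Hder as [phi Hphi | phi Hax | phi psi _ IHphi _ IHimp].
  - exact (HGamma phi Hphi).
  - exact (axiom_designated v phi Hf Hax).
  - exact (mp_designated v (proj1 Hf) phi psi IHphi IHimp).
Qed.
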